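(* For all $n\ge 2$, $\sum_{i=0}^{n-1} g_i g_{n-1-i}=g_n+f_n$.
   Context: For $x\in S_n$, $\mathrm{ind}_x(a)$ is the position of the value $a$ in $x$, and $\mathrm{small}_{k}(x)$ is the subsequence of $x$ formed by the entries $1,\dots,k$. An occurrence of the bivincular pattern $123^{\star}$ in $x$ is a pair of indices $a<b<n$ with $x_a<x_b$ and $x_{b+1}=x_b+1$. Let $g_n=|\mathrm{Av}_n(132,123^{\star})|$ be the number of permutations in $S_n$ avoiding both the classical pattern $132$ and $123^{\star}$ (with $g_0=1$), and let $f_n$ be the number of $x\in S_n$ avoiding $132$ such that $\mathrm{ind}_x(n)-1=\mathrm{ind}_x(n-1)>1$ and $\mathrm{small}_{n-1}(x)$ avoids $123^{\star}$. *)

(* Permutations of S_n are represented as sequences of the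
   values 1..n in one-line notation: x is in S_n iff perm_eq x (iota 1 n).
   Positions are 0-indexed here (nth), values are 1..n as in the paper. *)
From mathcomp Require Import all_boot.
Set Implicit Arguments. Unset Strict Implicit. Unset Printing Implicit Defensive.

Definition Sn (n : nat) : seq (seq nat) := permutations (iota 1 n).

Definition contains132 (x : seq nat) : bool :=
  [exists i : 'I_(size x), exists j : 'I_(size x), exists k : 'I_(size x),
     [&& (i < j)%N, (j < k)%N,
         (nth 0 x i < nth 0 x k)%N & (nth 0 x k < nth 0 x j)%N]].

Definition avoids132 (x : seq nat) : bool := ~~ contains132 x.

(* Occurrence of the bivincular pattern 123star: positions a<b<n (1-indexed)
   with x_a < x_b and x_{b+1} = x_b + 1.  With 0-indexed positions:
   a < b, b+1 < size x. *)
Definition contains123star (x : seq nat) : bool :=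
  [exists a : 'I_(size x), exists b : 'I_(size x),
     [&& (a < b)%N, (b.+1 < size x)%N,
         (nth 0 x a < nth 0 x b)%N & nth 0 x b.+1 == (nth 0 x b).+1]].

Definition avoids123star (x : seq nat) : bool := ~~ contains123star x.

Definition ind (x : seq nat) (a : nat) : nat := (index a x).+1.

Definition small (k : nat) (x : seq nat) : seq nat := [seq v <- x | (v <= k)%N].

Definition g (n : nat) : nat :=
  count (fun x => avoids132 x && avoids123star x) (Sn n).

Definition f (n : nat) : nat :=
  count (fun x => [&& avoids132 x,
                     ind x n - 1 == ind x n.-1,
                     (1 < ind x n.-1)%N &
                     avoids123star (small n.-1 x)]) (Sn n).

From mathcomp Require Import all_boot zify.
Set Implicit Arguments. Unset Strict Implicit. Unset Printing Implicit Defensive.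

(* A 132-avoiding permutation x of [n+1] splits at its maximum as L' (n+1) R
   with every entry of L' above every entry of R; hence L' is a shift of some
   L in Av_i(132) and R is in Av_(n-i)(132), where i entries precede n+1, and
   each such pair (L, R) occurs exactly once.  An occurrence of 123* in x lies
   inside L' or inside R, or it is the adjacency n, n+1 preceded by a smaller
   entry, i.e. |L| > 1 and L ends with its maximum i.  The permutations counted
   by f_(n+1) are exactly those in which this last case happens while L and R
   avoid 123*, so every pair (L, R) of permutations avoiding both 132 and 123*
   contributes exactly one to g_(n+1) + f_(n+1). *)

Lemma contains132P x :
  reflect (exists i j k, [/\ i < j, j < k, k < size x,
                             nth 0 x i < nth 0 x k & nth 0 x k < nth 0 x j])
          (contains132 x).
Proof.
apply: (iffP existsP) => [[i /existsP [j /existsP [k /and4P [ij jk ik kj]]]]|].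
  by exists i, j, k.
case=> i [j [k [ij jk kx ik kj]]].
have jx : j < size x by lia.
have ix : i < size x by lia.
exists (Ordinal ix); apply/existsP; exists (Ordinal jx); apply/existsP.
by exists (Ordinal kx); apply/and4P.
Qed.

Lemma contains123starP x :
  reflect (exists a b, [/\ a < b, b.+1 < size x,
                           nth 0 x a < nth 0 x b & nth 0 x b.+1 = (nth 0 x b).+1])
          (contains123star x).
Proof.
apply: (iffP existsP) => [[a /existsP [b /and4P [ab bx xab /eqP xb]]]|].
  by exists a, b.
case=> a [b [ab bx xab xb]].
have bx' : b < size x by lia.
have ax : a < size x by lia.
exists (Ordinal ax); apply/existsP; exists (Ordinal bx').
by apply/and4P; split=> //; apply/eqP.
Qed.

Lemma contains132_catl s1 s2 : contains132 s1 -> contains132 (s1 ++ s2).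
Proof.
case/contains132P=> i [j [k [ij jk ks ik kj]]]; apply/contains132P.
exists i, j, k; rewrite size_cat !nth_cat !ifT //; try lia.
by split=> //; lia.
Qed.

Lemma contains132_catr s1 s2 : contains132 s2 -> contains132 (s1 ++ s2).
Proof.
case/contains132P=> i [j [k [ij jk ks ik kj]]]; apply/contains132P.
exists (size s1 + i), (size s1 + j), (size s1 + k).
rewrite size_cat !nth_cat !ifN ?addKn; try lia.
by split=> //; lia.
Qed.

Lemma contains123star_catl s1 s2 : contains123star s1 -> contains123star (s1 ++ s2).
Proof.
case/contains123starP=> a [b [ab bs xab xb]]; apply/contains123starP.
exists a, b; rewrite size_cat !nth_cat !ifT //; try lia.
by split=> //; lia.
Qed.

Lemma contains123star_catr s1 s2 : contains123star s2 -> contains123star (s1 ++ s2).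
Proof.
case/contains123starP=> a [b [ab bs xab xb]]; apply/contains123starP.
exists (size s1 + a), (size s1 + b).
rewrite size_cat -[(size s1 + b).+1]addnS !nth_cat !ifN ?addKn; try lia.
by split=> //; lia.
Qed.

Lemma contains132_shift k s : contains132 (map (addn k) s) = contains132 s.
Proof.
apply/contains132P/contains132P=> -[i [j [k' [ij jk ks ik kj]]]];
  rewrite size_map in ks *; exists i, j, k'.
  by move: ik kj; rewrite !(nth_map 0) //; try lia; move=> *; split=> //; lia.
by rewrite !(nth_map 0) //; try lia; split=> //; lia.
Qed.

Lemma contains123star_shift k s :
  contains123star (map (addn k) s) = contains123star s.
Proof.
apply/contains123starP/contains123starP=> -[a [b [ab bs xab xb]]];
  rewrite size_map in bs *; exists a, b.
  by move: xab xb; rewrite !(nth_map 0) //; try lia; move=> *; split=> //; lia.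
by rewrite !(nth_map 0) //; try lia; split=> //; lia.
Qed.

Lemma contains132_skew (L R : seq nat) :
  allrel gtn L R -> contains132 (L ++ R) = contains132 L || contains132 R.
Proof.
move=> /allrelP LR; apply/idP/orP=> [|[/contains132_catl|/contains132_catr] //].
case/contains132P=> i [j [k [ij jk kx ik kj]]]; rewrite size_cat in kx.
have [kL|Lk] := ltnP k (size L).
  left; apply/contains132P; exists i, j, k.
  by move: ik kj; rewrite !nth_cat !ifT //; try lia; split.
have [iL|Li] := ltnP i (size L).
  have kR : k - size L < size R by lia.
  have /= := LR _ _ (mem_nth 0 iL) (mem_nth 0 kR).
  by move: ik; rewrite !nth_cat iL ifN; lia.
right; apply/contains132P; exists (i - size L), (j - size L), (k - size L).
by move: ik kj; rewrite !nth_cat !ifN; try lia; split=> //; lia.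
Qed.

Lemma contains123star_skew (L R : seq nat) :
  allrel gtn L R -> contains123star (L ++ R) = contains123star L || contains123star R.
Proof.
move=> /allrelP LR.
apply/idP/orP=> [|[/contains123star_catl|/contains123star_catr] //].
case/contains123starP=> a [b [ab bx xab xb]]; rewrite size_cat in bx.
have [bL|Lb] := ltnP b (size L).
  have [b1L|Lb1] := ltnP b.+1 (size L).
    left; apply/contains123starP; exists a, b.
    by move: xab xb; rewrite !nth_cat !ifT //; try lia; split.
  have b1R : b.+1 - size L < size R by lia.
  have /= := LR _ _ (mem_nth 0 bL) (mem_nth 0 b1R).
  by move: xb; rewrite !nth_cat bL ifN; lia.
have bR : b - size L < size R by lia.
have [aL|La] := ltnP a (size L).
  have /= := LR _ _ (mem_nth 0 aL) (mem_nth 0 bR).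
  by move: xab; rewrite !nth_cat aL ifN; lia.
right; apply/contains123starP; exists (a - size L), (b - size L).
have -> : (b - size L).+1 = b.+1 - size L by lia.
by move: xab xb; rewrite !nth_cat !ifN; try lia; split=> //; lia.
Qed.

Lemma contains132_rcons_max (L : seq nat) c :
  all (ltn^~ c) L -> contains132 (rcons L c) = contains132 L.
Proof.
move=> /allP Lc; apply/idP/idP; last by rewrite -cats1; apply: contains132_catl.
case/contains132P=> i [j [k [ij jk kx ik kj]]]; rewrite size_rcons in kx.
have jL : j < size L by lia.
have [kL|Lk] := ltnP k (size L).
  apply/contains132P; exists i, j, k.
  by move: ik kj; rewrite !nth_rcons !ifT //; try lia; split.
have /= := Lc _ (mem_nth 0 jL).
by move: kj; rewrite !nth_rcons jL ifN ?ifT; lia.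
Qed.

Lemma contains123star_rcons_max (L : seq nat) c : uniq L -> all (ltn^~ c) L ->
  contains123star (rcons L c) =
  contains123star L || (1 < size L) && (last 0 L == c.-1).
Proof.
move=> uL /allP Lc; apply/idP/orP=> [|[|/andP [L1 /eqP Lc1]]].
- case/contains123starP=> a [b [ab bx xab xb]]; rewrite size_rcons in bx.
  have [bL|Lb] := ltnP b.+1 (size L).
    left; apply/contains123starP; exists a, b.
    by move: xab xb; rewrite !nth_rcons !ifT //; try lia; split.
  right; have eb : b = (size L).-1 by lia.
  have L0 : 0 < size L by lia.
  move: xb; rewrite !nth_rcons eb prednK // ltnn eqxx leqnn nth_last => ->.
  by rewrite eqxx andbT; lia.
- by rewrite -cats1; apply: contains123star_catl.
- apply/contains123starP; exists 0, (size L).-1.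
  have L0 : 0 < size L by lia.
  have L0c := Lc _ (mem_nth 0 L0).
  (* [simpl] identifies the [size L] coming from eqType lemmas with ours for [lia] *)
  have : nth 0 L 0 != nth 0 L (size L).-1.
    by rewrite nth_uniq //; [apply/eqP|]; simpl; lia.
  rewrite size_rcons prednK // !nth_rcons L0 ltnn eqxx ltn_predL L0 nth_last Lc1.
  by move=> /eqP ?; split; simpl in *; lia.
Qed.

Lemma avoids132_max_skew (L R : seq nat) c :
  avoids132 (L ++ c :: R) -> uniq (L ++ c :: R) -> all (ltn^~ c) R -> allrel gtn L R.
Proof.
move=> /contains132P no132 uLR /allP Rc; apply/allrelP=> u v uL vR /=.
have [//|uv|uv] := ltngtP v u; last first.
  move: uLR; rewrite cat_uniq => /and3P [_ /hasP []].
  by exists v; [rewrite inE vR orbT | rewrite uv].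
case: no132; exists (index u L), (size L), (size L + (index v R).+1).
have iu : index u L < size L by rewrite index_mem.
have iv : index v R < size R by rewrite index_mem.
rewrite size_cat /= !nth_cat iu ltnn subnn ifN ?addKn /= ?nth_index //; last lia.
by have /= := Rc v vR; split=> //; lia.
Qed.

Lemma perm_iota_skew a (L R : seq nat) : allrel gtn L R ->
  perm_eq (L ++ R) (iota a (size L + size R)) ->
  perm_eq R (iota a (size R)) /\ perm_eq L (iota (a + size R) (size L)).
Proof.
move=> /allrelP LR pLR.
have sorted_RL : sorted leq (sort leq R ++ sort leq L).
  rewrite sorted_pairwise ?pairwise_cat; last exact: leq_trans.
  rewrite -!sorted_pairwise; try exact: leq_trans.
  rewrite !sort_sorted ?andbT; try exact: leq_total.
  by apply/allrelP=> v u; rewrite !mem_sort => vR uL; apply/ltnW/LR.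
have : sort leq R ++ sort leq L = iota a (size R) ++ iota (a + size R) (size L).
  rewrite -iotaD; apply: (sorted_eq leq_trans anti_leq) => //; first exact: iota_sorted.
  rewrite addnC; apply: perm_trans pLR.
  by rewrite perm_catC; apply: perm_cat; rewrite perm_sort.
move/eqP; rewrite eqseq_cat ?size_sort ?size_iota // => /andP [/eqP <- /eqP <-].
by split; rewrite perm_sym perm_sort.
Qed.

Lemma mem_Sn n x : (x \in Sn n) = perm_eq x (iota 1 n).
Proof. exact: mem_permutations. Qed.

Lemma Sn_size n x : x \in Sn n -> size x = n.
Proof. by rewrite mem_Sn => /perm_size ->; rewrite size_iota. Qed.

Lemma Sn_uniq n x : x \in Sn n -> uniq x.
Proof. by rewrite mem_Sn => /perm_uniq ->; apply: iota_uniq. Qed.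

Lemma Sn_mem n x u : x \in Sn n -> (u \in x) = (0 < u <= n).
Proof. by rewrite mem_Sn => /perm_mem ->; rewrite mem_iota add1n ltnS. Qed.

Lemma ind_pred_max (L R : seq nat) c : uniq (L ++ c :: R) ->
  (ind (L ++ c :: R) c - 1 == ind (L ++ c :: R) c.-1) && (1 < ind (L ++ c :: R) c.-1) =
  (1 < size L) && (last 0 L == c.-1).
Proof.
move=> uLR; have cL : c \notin L.
  by move: uLR; rewrite cat_uniq /= negb_or => /and4P [_ /andP []].
rewrite /ind index_cat (negbTE cL) /= eqxx addn0 subn1 /= ltnS lt0n -nth_last.
set k := index c.-1 _; apply/idP/idP=> [/andP [/eqP sL k0]|/andP [L1 /eqP Lc]].
  have cx : c.-1 \in L ++ c :: R by rewrite -index_mem -/k size_cat sL ltn_addr.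
  have e := nth_index 0 cx.
  by rewrite sL ltnS lt0n k0 -e nth_cat sL ltnSn /= -/k.
have kL : (size L).-1 < size L by rewrite ltn_predL; lia.
have e : nth 0 (L ++ c :: R) (size L).-1 = c.-1 by rewrite nth_cat kL.
have -> : k = (size L).-1.
  by rewrite /k -e index_uniq // size_cat ltn_addr.
by rewrite prednK ?(ltnW L1) // eqxx -lt0n -subn1 subn_gt0.
Qed.

(* [join_max L R] is (L ⊕ 1) ⊖ R in the usual notation for permutation patterns. *)
Definition join_max (L R : seq nat) : seq nat :=
  map (addn (size R)) L ++ (size L + size R).+1 :: R.

Lemma join_max_inj (L1 R1 L2 R2 : seq nat) :
  size L1 = size L2 -> join_max L1 R1 = join_max L2 R2 -> L1 = L2 /\ R1 = R2.
Proof.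
move=> eL /eqP; rewrite /join_max eqseq_cat ?size_map //.
case/andP=> /eqP + /eqP [_ eR]; rewrite eR => /inj_map eLm.
by split=> //; apply: eLm; apply: addnI.
Qed.

Definition f_condition n x :=
  [&& ind x n - 1 == ind x n.-1, 1 < ind x n.-1 & avoids123star (small n.-1 x)].

Section JoinMax.

Variables (i m : nat) (L R : seq nat).
Hypotheses (SnL : L \in Sn i) (SnR : R \in Sn m).

Let sizeL : size L = i. Proof. exact: Sn_size SnL. Qed.
Let sizeR : size R = m. Proof. exact: Sn_size SnR. Qed.

Let join_maxE : join_max L R = rcons (map (addn m) L) (i + m).+1 ++ R.
Proof. by rewrite /join_max cat_rcons sizeL sizeR. Qed.

Let shifted_below_max : all (ltn^~ (i + m).+1) (map (addn m) L).
Proof.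
apply/allP=> _ /mapP [u uL ->]; move: uL; rewrite (Sn_mem _ SnL) /=; lia.
Qed.

Let shifted_above_R : allrel gtn (map (addn m) L) R.
Proof.
apply/allrelP=> _ v /mapP [u + ->]; rewrite (Sn_mem _ SnL) (Sn_mem _ SnR) /=; lia.
Qed.

Let join_max_skew : allrel gtn (rcons (map (addn m) L) (i + m).+1) R.
Proof.
rewrite -cats1 allrel_catl shifted_above_R allrel1l /=.
by apply/allP=> v; rewrite (Sn_mem _ SnR) /=; lia.
Qed.

Let last_shifted :
  (1 < i) && (last 0 (map (addn m) L) == i + m) = (1 < i) && (last 0 L == i).
Proof.
case: (ltnP 1 i) => //= i1.
by move: SnL sizeL i1; case: L => [|u s] _ <- //= _; rewrite last_map addnC eqn_add2r.
Qed.

Lemma join_max_Sn : join_max L R \in Sn (i + m).+1.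
Proof.
move: SnL SnR; rewrite join_maxE !mem_Sn => pL pR.
have -> : iota 1 (i + m).+1 = iota 1 m ++ rcons (map (addn m) (iota 1 i)) (i + m).+1.
  by rewrite -iotaDl (addnC m 1) -cats1 catA -iotaD -[(i + m).+1]addn1 iotaD
             (addnC i m) addn1 add1n.
rewrite perm_catC; apply: perm_cat pR _.
by rewrite -!cats1 perm_cat2r; apply: perm_map.
Qed.

Lemma index_join_max : index (i + m).+1 (join_max L R) = i.
Proof.
rewrite /join_max sizeL sizeR index_cat ifN /= ?eqxx ?addn0 ?size_map //.
by apply/negP=> /(allP shifted_below_max) /=; rewrite ltnn.
Qed.

Lemma avoids132_join_max : avoids132 (join_max L R) = avoids132 L && avoids132 R.
Proof.
by rewrite /avoids132 join_maxE contains132_skew // contains132_rcons_max //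
           contains132_shift negb_or.
Qed.

Lemma avoids123star_join_max :
  avoids123star (join_max L R) =
  [&& avoids123star L, avoids123star R & ~~ ((1 < i) && (last 0 L == i))].
Proof.
have uL : uniq (map (addn m) L) by rewrite map_inj_uniq ?(Sn_uniq SnL) //; apply: addnI.
rewrite /avoids123star join_maxE contains123star_skew //.
rewrite contains123star_rcons_max // contains123star_shift size_map sizeL.
by rewrite /= last_shifted orbAC -!negb_or -orbA.
Qed.

Lemma small_join_max : small (i + m) (join_max L R) = map (addn m) L ++ R.
Proof.
rewrite /join_max sizeL sizeR /small filter_cat /= ltnn.
congr (_ ++ _); apply/all_filterP/allP=> u.
  by move/(allP shifted_below_max).
by rewrite (Sn_mem _ SnR) /=; lia.
Qed.

Lemma f_condition_join_max :
  f_condition (i + m).+1 (join_max L R) =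
  [&& 1 < i, last 0 L == i, avoids123star L & avoids123star R].
Proof.
have uJ : uniq (map (addn m) L ++ (i + m).+1 :: R).
  by rewrite -sizeL -sizeR; apply: (Sn_uniq (join_max_Sn)).
rewrite /f_condition andbA /= small_join_max /join_max sizeL sizeR ind_pred_max //.
rewrite size_map sizeL last_shifted /avoids123star contains123star_skew //.
by rewrite contains123star_shift negb_or -!andbA.
Qed.

Lemma avoids123star_add_f_condition_join_max :
  avoids123star (join_max L R) + f_condition (i + m).+1 (join_max L R) =
  avoids123star L && avoids123star R.
Proof.
rewrite avoids123star_join_max f_condition_join_max.
by case: (avoids123star L); case: (avoids123star R); case: (1 < i); case: (_ == i).
Qed.

End JoinMax.

Lemma Sn_avoids132_join_max n (x : seq nat) : x \in Sn n.+1 -> avoids132 x ->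
  exists L R, [/\ x = join_max L R, L \in Sn (size L) & R \in Sn (size R)].
Proof.
move=> Snx av; have xn : n.+1 \in x by rewrite (Sn_mem _ Snx) /=.
case/splitPr: xn Snx av => L R Snx av; have ux := Sn_uniq Snx.
have Rc : all (ltn^~ n.+1) R.
  move: ux; rewrite cat_uniq /= => /and4P [_ _ cR _].
  apply/allP=> v vR /=; rewrite ltn_neqAle.
  have : v \in L ++ n.+1 :: R by rewrite mem_cat inE vR !orbT.
  rewrite (Sn_mem _ Snx) => /andP [_ ->]; rewrite andbT.
  by apply: contraNneq cR => <-.
have LR := avoids132_max_skew av ux Rc.
have szLR : size L + size R = n by move: (Sn_size Snx); rewrite size_cat /=; lia.
have pLR : perm_eq (L ++ R) (iota 1 (size L + size R)).
  have iota_rcons : iota 1 n.+1 = rcons (iota 1 n) n.+1.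
    by rewrite -cats1 -(iotaD 1 n 1) addn1.
  rewrite szLR -(perm_cons n.+1) -cat1s perm_catCA /=.
  by rewrite perm_sym -perm_rcons -iota_rcons perm_sym -mem_Sn.
have [pR pL] := perm_iota_skew LR pLR.
set L' := map (subn^~ (size R)) L.
have eL : map (addn (size R)) L' = L.
  rewrite -map_comp map_id_in // => u uL /=.
  by move: uL; rewrite (perm_mem pL) mem_iota; lia.
exists L', R; split; rewrite ?mem_Sn ?size_map //.
  by rewrite /join_max eL size_map szLR.
by move: (perm_map (subn^~ (size R)) pL); rewrite addnC iotaDl (mapK (addKn _)).
Qed.

Definition Av132 n := [seq x <- Sn n | avoids132 x].

Lemma mem_Av132 n x : (x \in Av132 n) = avoids132 x && (x \in Sn n).
Proof. by rewrite mem_filter. Qed.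

Lemma Av132_uniq n : uniq (Av132 n).
Proof. exact/filter_uniq/permutations_uniq. Qed.

Lemma g_Av132 n : g n = count avoids123star (Av132 n).
Proof. by rewrite count_filter; apply: eq_count => x; rewrite /= andbC. Qed.

Lemma f_Av132 n : f n = count (f_condition n) (Av132 n).
Proof. by rewrite count_filter; apply: eq_count => x; rewrite /= andbC. Qed.

Lemma perm_Av132_index_max n i : i <= n ->
  perm_eq [seq x <- Av132 n.+1 | index n.+1 x == i]
          [seq join_max L R | L <- Av132 i, R <- Av132 (n - i)].
Proof.
move=> le_in; have e : (i + (n - i)).+1 = n.+1 by rewrite subnKC.
apply: uniq_perm; first exact/filter_uniq/Av132_uniq.
  apply: allpairs_uniq; try exact: Av132_uniq.
  move=> _ _ /allpairsP [[L1 R1] [/= + _ ->]] /allpairsP [[L2 R2] [/= + _ ->]] /=.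
  rewrite !mem_Av132 => /andP [_ /Sn_size sL1] /andP [_ /Sn_size sL2].
  by case/join_max_inj => [|-> ->] //; rewrite sL1 sL2.
move=> x; apply/idP/idP.
  rewrite mem_filter mem_Av132 => /and3P [/eqP <- av Snx].
  have [L [R [eqx SnL SnR]]] := Sn_avoids132_join_max Snx av; subst x.
  have sz : (size L + size R).+1 = n.+1.
    by rewrite -(Sn_size Snx) (Sn_size (join_max_Sn SnL SnR)).
  rewrite -sz (index_join_max SnL SnR) (_ : n - size L = size R); last lia.
  apply/allpairsP; exists (L, R); rewrite /= !mem_Av132 SnL SnR !andbT.
  by move: av; rewrite (avoids132_join_max SnL SnR) => /andP [-> ->].
case/allpairsP=> -[L R] [/=]; rewrite !mem_Av132 => /andP [avL SnL] /andP [avR SnR] ->.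
rewrite mem_filter mem_Av132 -e (index_join_max SnL SnR) (join_max_Sn SnL SnR).
by rewrite (avoids132_join_max SnL SnR) avL avR eqxx.
Qed.

Lemma count_sumE (T : Type) (a : pred T) (s : seq T) : count a s = \sum_(x <- s) a x.
Proof. by rewrite -sumn_count sumnE big_map. Qed.

Lemma big_seq_partition_ord (T : eqType) (s : seq T) (h : T -> nat) n (F : T -> nat) :
  {in s, forall x, h x < n} ->
  \sum_(x <- s) F x = \sum_(j < n) \sum_(x <- s | h x == j) F x.
Proof.
move=> hs; rewrite (exchange_big_dep xpredT) //=; apply: eq_big_seq => x /hs hx.
by rewrite (big_pred1 (Ordinal hx)) // => j; rewrite /= eq_sym.
Qed.

Theorem lemma3p20 (n : nat) (hn : (2 <= n)%N) :
  \sum_(i < n) g i * g (n.-1 - i) = g n + f n.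
Proof.
case: n hn => [//|n] _ /=.
rewrite g_Av132 f_Av132 !count_sumE -big_split /=.
rewrite (big_seq_partition_ord (h := index n.+1) (n := n.+1)); last first.
  move=> x; rewrite mem_Av132 => /andP [_ Snx].
  by rewrite -{2}(Sn_size Snx) index_mem (Sn_mem _ Snx) /=.
apply: eq_bigr => i _.
rewrite -big_filter (perm_big _ (@perm_Av132_index_max n i (ltn_ord i))).
rewrite big_allpairs_dep.
rewrite !g_Av132 !count_sumE big_distrl; apply: eq_big_seq => L.
rewrite mem_Av132 big_distrr => /andP [_ SnL]; apply: eq_big_seq => R.
rewrite mem_Av132 => /andP [_ SnR] /=.
have -> : n.+1 = (i + (n - i)).+1 by rewrite subnKC // -ltnS.
by rewrite avoids123star_add_f_condition_join_max // mulnb.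
Qed.
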